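(* Every connected configuration of $n\geq 2$ particles on the triangular lattice with no holes has perimeter at least $\sqrt{n}$.
   Context: Let $\Gamma$ be the triangular lattice. A configuration of $n$ particles is a set of $n$ vertices of $\Gamma$ (up to translation). It is connected if the subgraph of $\Gamma$ induced by the occupied vertices is connected. A hole is a maximal finite connected set of unoccupied vertices. For a connected configuration with no holes, its perimeter is the length of the closed walk around its single external boundary, with an edge traversed twice counted twice. *)

From Stdlib Require Import ZArith List Reals.
Import ListNotations.

(** Triangular lattice in axial coordinates: the point (x,y) is embedded at
    (x + y/2, y*sqrt(3)/2). Neighbours of (x,y) are (x,y)+dir i, i = 0..5,
    listed in COUNTERCLOCKWISE order: E, NE, NW, W, SW, SE. *)
Definition point := (Z * Z)%type.

Definition padd (p q : point) : point := (fst p + fst q, snd p + snd q)%Z.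
Definition psub (p q : point) : point := (fst p - fst q, snd p - snd q)%Z.

Definition dir (i : nat) : point :=
  match Nat.modulo i 6 with
  | 0 => (1, 0)%Z
  | 1 => (0, 1)%Z
  | 2 => (-1, 1)%Z
  | 3 => (-1, 0)%Z
  | 4 => (0, -1)%Z
  | _ => (1, -1)%Z
  end.

Definition adj (p q : point) : Prop := exists i, (i < 6)%nat /\ q = padd p (dir i).

Definition peqb (p q : point) : bool := Z.eqb (fst p) (fst q) && Z.eqb (snd p) (snd q).

Definition occb (C : list point) (p : point) : bool := existsb (peqb p) C.

Inductive path_in (S : point -> Prop) : point -> point -> Prop :=
| path_refl p : S p -> path_in S p p
| path_step p q r : S p -> adj p q -> path_in S q r -> path_in S p r.

Definition connected (C : list point) : Prop :=
  forall p q, In p C -> In q C -> path_in (fun x => In x C) p q.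

(** A hole is a maximal finite connected set of unoccupied vertices, i.e. a
    connected component of the unoccupied vertices that is finite. *)
Definition no_holes (C : list point) : Prop :=
  forall p, ~ In p C ->
    ~ exists l : list point, forall q, path_in (fun x => ~ In x C) p q -> In q l.

Definition dir_index (d : point) : nat :=
  match find (fun i => peqb (dir i) d) [0;1;2;3;4;5]%nat with
  | Some i => i
  | None => 0%nat
  end.

(** succ C v u: the first occupied neighbour of v met when rotating CLOCKWISE
    around v starting just after the direction of u (u itself comes last). *)
Definition succ (C : list point) (v u : point) : point :=
  let k := dir_index (psub u v) in
  match find (fun j => occb C (padd v (dir (k + 6 - j)))) [1;2;3;4;5;6]%nat with
  | Some j => padd v (dir (k + 6 - j))
  | None => u
  end.

(** Darts (directed edges) and the face permutation: after traversing u -> v,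
    continue with v -> succ v u. This traces each face with the face on the
    left of the dart (bounded faces counterclockwise, the outer face clockwise). *)
Definition dart := (point * point)%type.
Definition next (C : list point) (d : dart) : dart := (snd d, succ C (snd d) (fst d)).

(** The bottom-most, then left-most occupied vertex: it lies on the external
    boundary, with the outer face in the directions W, SW, SE. *)
Definition bottom_left (C : list point) (u : point) : Prop :=
  In u C /\ forall q, In q C -> (snd u < snd q)%Z \/ (snd u = snd q /\ (fst u <= fst q)%Z).

(** The dart leaving u with the outer face on its left. *)
Definition start_dart (C : list point) (u : point) : dart :=
  (u, succ C u (padd u (dir 3))).

(** Perimeter = length of the closed walk around the external boundary
    (period of the outer-face dart orbit; edges traversed twice count twice). *)
Definition perimeter (C : list point) (p : nat) : Prop :=
  exists u, bottom_left C u /\ (0 < p)%nat /\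
    Nat.iter p (next C) (start_dart C u) = start_dart C u /\
    forall k, (0 < k < p)%nat -> Nat.iter k (next C) (start_dart C u) <> start_dart C u.

(* Let u be the bottom-left vertex and consider the boundary walk leaving u with
   the outer face on its left; it is closed, of length p say.  Call a lattice edge
   crossing when it joins an occupied and an empty vertex and the wedge of the face
   between them at the occupied end lies on this walk.  Crossing edges form a Z/2
   cocycle (every triangle contains an even number of them), so they are the
   coboundary of a potential vanishing below the configuration.  The potential is
   constant on the connected configuration and equals 1 at u, but vanishes beyond
   the leftmost, rightmost and topmost vertices, so the walk visits all three.
   Each step changes each coordinate by at most 1, hence the width and height are at
   most p/2 and the n vertices fit in a box with at most (p/2 + 1)^2 <= p^2 points. *)

From Stdlib Require Import ZArith List Reals Lia Bool Arith Wf_nat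
  FunctionalExtensionality ClassicalDescription Classical.
Import ListNotations.

Definition nbr (v : point) (i : nat) : point := padd v (dir i).

Lemma mod6_lt i : i mod 6 < 6.
Proof. apply Nat.mod_upper_bound; lia. Qed.

Ltac cases6 i :=
  let H := fresh in let m := fresh "m" in
  assert (H := mod6_lt i); revert H;
  destruct (i mod 6) as [|[|[|[|[|[|m]]]]]]; intro H; [..| exfalso; lia].

Ltac simpl_dir :=
  repeat match goal with
  |- context [dir ?n] => let d := eval vm_compute in (dir n) in change (dir n) with d
  end.

Lemma dir_mod i : dir i = dir (i mod 6).
Proof. unfold dir. rewrite Nat.Div0.mod_mod. reflexivity. Qed.

Lemma dir_shift i k : dir (i + k) = dir (i mod 6 + k).
Proof.
  rewrite (dir_mod (i + k)), (dir_mod (i mod 6 + k)), Nat.Div0.add_mod_idemp_l.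
  reflexivity.
Qed.

Lemma nbr_mod v i : nbr v i = nbr v (i mod 6).
Proof. unfold nbr. rewrite dir_mod. reflexivity. Qed.

Lemma mod6_add6 i : (i + 6) mod 6 = i mod 6.
Proof. replace (i + 6) with (i + 1 * 6) by lia. apply Nat.Div0.mod_add. Qed.

Lemma mod6_succ i : (i mod 6 + 1) mod 6 = (i + 1) mod 6.
Proof. apply Nat.Div0.add_mod_idemp_l. Qed.

Lemma nbr_add6 v i : nbr v (i + 6) = nbr v i.
Proof. rewrite nbr_mod, mod6_add6, <- nbr_mod. reflexivity. Qed.

Lemma nbr_opp v i : nbr (nbr v i) (i + 3) = v.
Proof.
  unfold nbr. rewrite dir_shift, (dir_mod i). destruct v.
  cases6 i; simpl_dir; unfold padd; simpl; f_equal; lia.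
Qed.

Lemma nbr_triangle v i : nbr (nbr v i) (i + 2) = nbr v (i + 1).
Proof.
  unfold nbr. rewrite (dir_shift i 2), (dir_shift i 1), (dir_mod i). destruct v.
  cases6 i; simpl_dir; unfold padd; simpl; f_equal; lia.
Qed.

Lemma nbr_triangle' v i : nbr (nbr v (i + 1)) (i + 5) = nbr v i.
Proof.
  unfold nbr. rewrite (dir_shift i 5), (dir_shift i 1), (dir_mod i). destruct v.
  cases6 i; simpl_dir; unfold padd; simpl; f_equal; lia.
Qed.

Lemma nbr_inj v i j : nbr v i = nbr v j -> i mod 6 = j mod 6.
Proof.
  unfold nbr. rewrite (dir_mod i), (dir_mod j). destruct v.
  cases6 i; cases6 j; simpl_dir; unfold padd; simpl; intro Heq;
    first [reflexivity | injection Heq; lia].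
Qed.

Lemma nbr_close p i :
  (Z.abs (fst (nbr p i) - fst p) <= 1)%Z /\ (Z.abs (snd (nbr p i) - snd p) <= 1)%Z.
Proof. unfold nbr, padd. rewrite dir_mod. destruct p. cases6 i; simpl_dir; simpl; lia. Qed.

Lemma nbr0 x y : nbr (x, y) 0 = ((x + 1)%Z, y).
Proof. unfold nbr, padd. simpl. f_equal; lia. Qed.
Lemma nbr1 x y : nbr (x, y) 1 = (x, (y + 1)%Z).
Proof. unfold nbr, padd. simpl. f_equal; lia. Qed.
Lemma nbr2 x y : nbr (x, y) 2 = ((x - 1)%Z, (y + 1)%Z).
Proof. unfold nbr, padd. simpl. f_equal; lia. Qed.

Lemma adj_nbr p q : adj p q <-> exists i, q = nbr p i.
Proof.
  split; intros [i H].
  - exists i. apply H.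
  - exists (i mod 6). split; [apply mod6_lt|]. rewrite H, nbr_mod. reflexivity.
Qed.

Lemma adj_sym p q : adj p q -> adj q p.
Proof. rewrite !adj_nbr. intros [i ->]. exists (i + 3). symmetry. apply nbr_opp. Qed.

Lemma psub_nbr v i : psub (nbr v i) v = dir i.
Proof. unfold nbr, psub, padd. destruct v, (dir i). simpl. f_equal; lia. Qed.

Lemma dir_index_dir i : dir_index (dir i) = i mod 6.
Proof. rewrite dir_mod. cases6 i; reflexivity. Qed.

Lemma peqb_eq p q : peqb p q = true <-> p = q.
Proof.
  destruct p as [a b], q as [c d]. unfold peqb. simpl.
  rewrite andb_true_iff, !Z.eqb_eq. split; [intros [-> ->]; auto | intro H; injection H; auto].
Qed.

Lemma occb_In C p : occb C p = true <-> In p C.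
Proof.
  unfold occb. rewrite existsb_exists. split.
  - intros [x [Hx Hp]]. apply peqb_eq in Hp. subst. exact Hx.
  - intro H. exists p. split; [exact H | apply peqb_eq; reflexivity].
Qed.

Definition periodic6 (g : nat -> bool) : Prop := forall m, g m = g (m mod 6).

Definition any6 (g : nat -> bool) : bool := g 0 || g 1 || g 2 || g 3 || g 4 || g 5.

Definition hexagon (b0 b1 b2 b3 b4 b5 : bool) (m : nat) : bool :=
  match m mod 6 with 0 => b0 | 1 => b1 | 2 => b2 | 3 => b3 | 4 => b4 | _ => b5 end.

(* [cw_idx g k]: the first direction [j] with [g j] met when turning clockwise
   from [k] ([k] itself last); [ccw_idx] likewise counterclockwise. *)
Definition cw_idx (g : nat -> bool) (k : nat) : nat :=
  match find (fun j => g (k + 6 - j)) [1;2;3;4;5;6] with Some j => k + 6 - j | None => k end.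

Definition ccw_idx (g : nat -> bool) (k : nat) : nat :=
  match find (fun j => g (k + j)) [1;2;3;4;5;6] with Some j => k + j | None => k end.

Lemma periodic6_hexagon g : periodic6 g -> g = hexagon (g 0) (g 1) (g 2) (g 3) (g 4) (g 5).
Proof.
  intro Hg. apply functional_extensionality. intro m.
  rewrite Hg. unfold hexagon. cases6 m; reflexivity.
Qed.

(* Reduces a statement about a 6-periodic pattern to its 64 instances and checks
   each by evaluation. *)
Ltac check_hexagons g :=
  intros;
  rewrite (periodic6_hexagon g) in * by assumption;
  repeat match goal with
  | H : periodic6 _ |- _ => clear H
  | H : _ = _ |- _ => revert H
  end;
  generalize (g 0) (g 1) (g 2) (g 3) (g 4) (g 5); intros b0 b1 b2 b3 b4 b5;
  repeat match goal with
  | k : nat, Hk : ?k < 6 |- _ => destruct k as [|[|[|[|[|[|k]]]]]]; [..| lia]; clear Hk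
  end;
  destruct b0, b1, b2, b3, b4, b5; vm_compute; intros; first [reflexivity | congruence].

Section Rotation.
Variable g : nat -> bool.
Hypothesis g_periodic : periodic6 g.

Lemma cw_idx_true k : k < 6 -> any6 g = true -> g (cw_idx g k) = true.
Proof. check_hexagons g. Qed.

Lemma cw_idx_inj k k' : k < 6 -> k' < 6 -> g k = true -> g k' = true ->
  cw_idx g k mod 6 = cw_idx g k' mod 6 -> k = k'.
Proof. check_hexagons g. Qed.

Lemma cw_idx_succ_true k : k < 6 -> g k = true -> cw_idx g ((k + 1) mod 6) mod 6 = k.
Proof. check_hexagons g. Qed.

Lemma cw_idx_succ_false k : k < 6 -> any6 g = true -> g k = false ->
  cw_idx g ((k + 1) mod 6) mod 6 = cw_idx g k mod 6.
Proof. check_hexagons g. Qed.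

Lemma ccw_idx_true k : k < 6 -> any6 g = true -> g (ccw_idx g k) = true.
Proof. check_hexagons g. Qed.

Lemma ccw_idx_succ_true k : k < 6 -> g ((k + 1) mod 6) = true -> ccw_idx g k mod 6 = (k + 1) mod 6.
Proof. check_hexagons g. Qed.

Lemma ccw_idx_succ_false k : k < 6 -> any6 g = true -> g k = false -> g ((k + 1) mod 6) = false ->
  ccw_idx g k mod 6 = ccw_idx g ((k + 1) mod 6) mod 6.
Proof. check_hexagons g. Qed.

Lemma cw_idx_ccw_idx k : k < 6 -> any6 g = true -> g k = false ->
  cw_idx g (ccw_idx g k mod 6) mod 6 = cw_idx g k mod 6.
Proof. check_hexagons g. Qed.

End Rotation.

Definition occ_at (C : list point) (v : point) (m : nat) : bool := occb C (nbr v m).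

Section Darts.
Variable C : list point.

Lemma occ_at_periodic6 v : periodic6 (occ_at C v).
Proof. intro m. unfold occ_at. rewrite nbr_mod. reflexivity. Qed.

Lemma occ_at_true v m : occ_at C v m = true <-> In (nbr v m) C.
Proof. apply occb_In. Qed.

Lemma occ_at_false v m : occ_at C v m = false <-> ~ In (nbr v m) C.
Proof. rewrite <- not_true_iff_false, occ_at_true. reflexivity. Qed.

Lemma any6_occ_at v j : In (nbr v j) C -> any6 (occ_at C v) = true.
Proof.
  rewrite <- occ_at_true, occ_at_periodic6. unfold any6.
  cases6 j; intros ->; rewrite ?orb_true_r; reflexivity.
Qed.

Lemma succ_nbr v i : succ C v (nbr v i) = nbr v (cw_idx (occ_at C v) (i mod 6)).
Proof.
  unfold succ. rewrite psub_nbr, dir_index_dir.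
  unfold cw_idx, occ_at. destruct find; [reflexivity|]. apply nbr_mod.
Qed.

Definition is_dart (d : dart) : Prop := In (fst d) C /\ In (snd d) C /\ adj (fst d) (snd d).

Lemma next_is_dart d : is_dart d -> is_dart (next C d).
Proof.
  destruct d as [a v]. intros [Ha [Hv Hadj]]. simpl in *.
  apply adj_sym, adj_nbr in Hadj as [i ->].
  unfold next. simpl. rewrite succ_nbr. split; [exact Hv | split].
  - apply occ_at_true, cw_idx_true; [apply occ_at_periodic6 | apply mod6_lt |].
    apply (any6_occ_at _ i Ha).
  - apply adj_nbr. eexists. reflexivity.
Qed.

Lemma next_inj d d' : is_dart d -> is_dart d' -> next C d = next C d' -> d = d'.
Proof.
  destruct d as [a v], d' as [a' v']. intros [Ha [_ Hadj]] [Ha' [_ Hadj']] Heq.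
  simpl in *. unfold next in Heq. simpl in Heq. injection Heq as <- Hs.
  apply adj_sym, adj_nbr in Hadj as [i ->]. apply adj_sym, adj_nbr in Hadj' as [i' ->].
  rewrite !succ_nbr in Hs. apply nbr_inj in Hs.
  enough (Hii : i mod 6 = i' mod 6) by (rewrite (nbr_mod v i), (nbr_mod v i'), Hii; reflexivity).
  apply (cw_idx_inj (occ_at C v)); try apply mod6_lt; try exact Hs;
    [apply occ_at_periodic6 | ..]; rewrite <- occ_at_periodic6; apply occ_at_true; assumption.
Qed.

Definition trace (s : dart) (k : nat) : dart := Nat.iter k (next C) s.

Lemma trace_is_dart s k : is_dart s -> is_dart (trace s k).
Proof. intro Hs. induction k; simpl; auto using next_is_dart. Qed.

Lemma trace_add s k m : trace s (k + m) = trace (trace s m) k.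
Proof. apply Nat.iter_add. Qed.

Lemma trace_cancel s i m : is_dart s -> trace s (i + m) = trace s i -> trace s m = s.
Proof.
  intro Hs. induction i as [|i IH]; [easy|].
  intro H. apply IH, next_inj; try apply trace_is_dart; auto.
Qed.

Lemma trace_returns s : is_dart s -> exists m, 0 < m /\ trace s m = s.
Proof.
  intro Hs. set (N := length (list_prod C C)).
  set (L := map (trace s) (seq 0 (S N))).
  assert (Hinc : incl L (list_prod C C)).
  { intros d Hd. apply in_map_iff in Hd as [k [<- _]].
    destruct (trace_is_dart s k Hs) as [H1 [H2 _]].
    destruct (trace s k). apply in_prod; auto. }
  assert (Hdup : ~ NoDup L).
  { intro Hnd. apply NoDup_incl_length in Hinc; [|exact Hnd].
    unfold L, N in Hinc. rewrite length_map, length_seq in Hinc. exact (Nat.lt_irrefl _ Hinc). }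
  apply NNPP. intro Hno. apply Hdup. unfold L.
  apply NoDup_map_NoDup_ForallPairs; [|apply seq_NoDup].
  assert (Hgen : forall a b, a < b -> trace s a <> trace s b).
  { intros a b Hab Heq. apply Hno. exists (b - a). split; [lia|].
    apply (trace_cancel s a); [exact Hs|]. replace (a + (b - a)) with b by lia.
    symmetry. exact Heq. }
  intros a b _ _ Hab. destruct (lt_eq_lt_dec a b) as [[Hlt|Heq]|Hgt]; auto.
  - exfalso. exact (Hgen a b Hlt Hab).
  - exfalso. exact (Hgen b a Hgt (eq_sym Hab)).
Qed.

Lemma trace_period s : is_dart s ->
  exists P, 0 < P /\ trace s P = s /\ forall k, 0 < k < P -> trace s k <> s.
Proof.
  intro Hs. set (Q := fun m => 0 < m /\ trace s m = s).
  destruct (dec_inh_nat_subset_has_unique_least_element Q) as [P [[[HP HPs] Hmin] _]].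
  - intro n. apply classic.
  - apply trace_returns. exact Hs.
  - exists P. repeat split; auto. intros k Hk Heq.
    assert (P <= k) by (apply Hmin; split; [lia | exact Heq]). lia.
Qed.

End Darts.

Lemma exists_max (c : point -> Z) (l : list point) :
  l <> [] -> exists m, In m l /\ forall q, In q l -> (c q <= c m)%Z.
Proof.
  induction l as [|a l IH]; intro Hne; [congruence|].
  destruct l as [|b l'].
  - exists a. split; [left; reflexivity|]. intros q [<- | []]. lia.
  - destruct IH as [m [Hm Hmax]]; [discriminate|].
    destruct (Z_le_gt_dec (c a) (c m)).
    + exists m. split; [right; exact Hm|]. intros q [<- | Hq]; auto.
    + exists a. split; [left; reflexivity|]. intros q [<- | Hq]; [lia|].
      specialize (Hmax q Hq). lia.
Qed.

Lemma exists_bottom_left (C : list point) : C <> [] -> exists u, bottom_left C u.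
Proof.
  unfold bottom_left. induction C as [|a l IH]; intro Hne; [congruence|].
  destruct l as [|b l'].
  - exists a. split; [left; reflexivity|]. intros q [<- | []]. right. lia.
  - destruct IH as [m [Hm Hmin]]; [discriminate|].
    destruct (Z_lt_ge_dec (snd a) (snd m)) as [H1 | H1];
      [|destruct (Z.eq_dec (snd a) (snd m)) as [H2 | H2];
        [destruct (Z_lt_ge_dec (fst a) (fst m)) as [H3 | H3]|]].
    all: first
      [ exists a; split; [left; reflexivity|]; intros q [<- | Hq]; [right; lia|];
        specialize (Hmin q Hq); lia
      | exists m; split; [right; exact Hm|]; intros q [<- | Hq]; [lia | auto] ].
Qed.

Section FaceOrbit.
Variables (C : list point) (s : dart) (P : nat).
Hypothesis s_dart : is_dart C s.
Hypothesis P_pos : 0 < P.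
Hypothesis P_period : trace C s P = s.
Hypothesis C_nbr : forall v, In v C -> exists j, In (nbr v j) C.

Lemma trace_add_period k : trace C s (k + P) = trace C s k.
Proof. rewrite trace_add, P_period. reflexivity. Qed.

Lemma trace_mod_period k : trace C s (k mod P) = trace C s k.
Proof.
  rewrite (Nat.div_mod_eq k P) at 2. induction (k / P) as [|q IH].
  - rewrite Nat.mul_0_r. reflexivity.
  - replace (P * S q + k mod P) with (P * q + k mod P + P) by lia.
    rewrite trace_add_period. exact IH.
Qed.

Definition on_orbit (d : dart) : Prop := exists k, trace C s k = d.

Lemma on_orbit_next d : on_orbit d -> on_orbit (next C d).
Proof. intros [k <-]. exists (S k). reflexivity. Qed.

Lemma on_orbit_prev d : is_dart C d -> on_orbit (next C d) -> on_orbit d.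
Proof.
  intros Hd [k Hk]. exists (k + P - 1).
  apply (next_inj C); [apply trace_is_dart; exact s_dart | exact Hd |].
  change (next C (trace C s (k + P - 1))) with (trace C s (S (k + P - 1))).
  replace (S (k + P - 1)) with (k + P) by lia.
  rewrite trace_add_period. exact Hk.
Qed.

Lemma any6_in v : In v C -> any6 (occ_at C v) = true.
Proof. intro Hv. destruct (C_nbr v Hv) as [j Hj]. exact (any6_occ_at C v j Hj). Qed.

Definition ccw_nbr (v : point) (i : nat) : point := nbr v (ccw_idx (occ_at C v) (i mod 6)).

Lemma ccw_nbr_mod v i : ccw_nbr v i = ccw_nbr v (i mod 6).
Proof. unfold ccw_nbr. rewrite Nat.Div0.mod_mod. reflexivity. Qed.

Lemma ccw_nbr_succ v i : In (nbr v (i + 1)) C -> ccw_nbr v i = nbr v (i + 1).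
Proof.
  intro H. unfold ccw_nbr. rewrite nbr_mod, (nbr_mod v (i + 1)), ccw_idx_succ_true.
  - rewrite mod6_succ. reflexivity.
  - apply occ_at_periodic6.
  - apply mod6_lt.
  - rewrite mod6_succ, <- occ_at_periodic6. apply occ_at_true. exact H.
Qed.

Lemma ccw_nbr_gap v i : In v C -> ~ In (nbr v i) C -> ~ In (nbr v (i + 1)) C ->
  ccw_nbr v i = ccw_nbr v (i + 1).
Proof.
  intros Hv Hi Hi1. unfold ccw_nbr.
  rewrite nbr_mod, (nbr_mod v (ccw_idx _ ((i + 1) mod 6))), <- mod6_succ, ccw_idx_succ_false.
  - reflexivity.
  - apply occ_at_periodic6.
  - apply mod6_lt.
  - apply any6_in. exact Hv.
  - rewrite <- occ_at_periodic6. apply occ_at_false. exact Hi.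
  - rewrite mod6_succ, <- occ_at_periodic6. apply occ_at_false. exact Hi1.
Qed.

Lemma succ_nbr_prev v i : In (nbr v i) C -> succ C v (nbr v (i + 1)) = nbr v i.
Proof.
  intro H. rewrite succ_nbr, nbr_mod, (nbr_mod v i), <- mod6_succ, cw_idx_succ_true.
  - reflexivity.
  - apply occ_at_periodic6.
  - apply mod6_lt.
  - rewrite <- occ_at_periodic6. apply occ_at_true. exact H.
Qed.

Lemma succ_nbr_gap v i : In v C -> ~ In (nbr v i) C ->
  succ C v (nbr v (i + 1)) = succ C v (nbr v i).
Proof.
  intros Hv Hi. rewrite !succ_nbr, nbr_mod, (nbr_mod v (cw_idx _ (i mod 6))), <- mod6_succ.
  rewrite cw_idx_succ_false.
  - reflexivity.
  - apply occ_at_periodic6.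
  - apply mod6_lt.
  - apply any6_in. exact Hv.
  - rewrite <- occ_at_periodic6. apply occ_at_false. exact Hi.
Qed.

(* [ccw_nbr v i] and [succ C v (nbr v i)] bound the empty wedge at [v] containing
   direction [i]: the face walk enters [v] from the former and leaves towards the
   latter. *)
Lemma next_ccw_nbr v i : In v C -> ~ In (nbr v i) C ->
  is_dart C (ccw_nbr v i, v) /\ next C (ccw_nbr v i, v) = (v, succ C v (nbr v i)).
Proof.
  intros Hv Hi. unfold ccw_nbr. set (c := ccw_idx (occ_at C v) (i mod 6)). split.
  - split; [|split]; simpl.
    + apply occ_at_true, ccw_idx_true;
        [apply occ_at_periodic6 | apply mod6_lt | apply any6_in; exact Hv].
    + exact Hv.
    + apply adj_nbr. exists (c + 3). symmetry. apply nbr_opp.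
  - unfold next. simpl. rewrite !succ_nbr, nbr_mod, (nbr_mod v (cw_idx _ (i mod 6))).
    do 2 f_equal. apply cw_idx_ccw_idx;
      [apply occ_at_periodic6 | apply mod6_lt | apply any6_in; exact Hv |].
    rewrite <- occ_at_periodic6. apply occ_at_false. exact Hi.
Qed.

Definition orbit_wedge (v : point) (i : nat) : Prop :=
  In v C /\ ~ In (nbr v i) C /\ on_orbit (ccw_nbr v i, v).

Lemma orbit_wedge_iff v i : In v C -> ~ In (nbr v i) C ->
  (orbit_wedge v i <-> on_orbit (v, succ C v (nbr v i))).
Proof.
  intros Hv Hi. destruct (next_ccw_nbr v i Hv Hi) as [Hd Hn]. unfold orbit_wedge.
  rewrite <- Hn. split.
  - intros (_ & _ & H). apply on_orbit_next. exact H.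
  - intro H. repeat split; auto. apply on_orbit_prev; assumption.
Qed.

Lemma orbit_wedge_add6 v i : orbit_wedge v (i + 6) <-> orbit_wedge v i.
Proof. unfold orbit_wedge. rewrite ccw_nbr_mod, mod6_add6, <- ccw_nbr_mod, nbr_add6. reflexivity. Qed.

Definition crosses (p : point) (i : nat) : Prop :=
  orbit_wedge p i \/ orbit_wedge (nbr p i) (i + 3).

Definition crossb (p : point) (i : nat) : bool :=
  if excluded_middle_informative (crosses p i) then true else false.

Lemma crossb_true p i : crossb p i = true <-> crosses p i.
Proof. unfold crossb. destruct excluded_middle_informative; intuition discriminate. Qed.

Lemma crossb_false p i : ~ crosses p i -> crossb p i = false.
Proof. intro H. unfold crossb. destruct excluded_middle_informative; tauto. Qed.

Lemma crossb_iff p i q j : (crosses p i <-> crosses q j) -> crossb p i = crossb q j.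
Proof.
  intro H. unfold crossb.
  destruct (excluded_middle_informative (crosses p i)), (excluded_middle_informative (crosses q j));
    tauto.
Qed.

Lemma crossb_sym p i : crossb (nbr p i) (i + 3) = crossb p i.
Proof.
  apply crossb_iff. unfold crosses. rewrite nbr_opp.
  replace (i + 3 + 3) with (i + 6) by lia. rewrite orbit_wedge_add6. tauto.
Qed.

Lemma crossb_add6 p i : crossb p (i + 6) = crossb p i.
Proof.
  apply crossb_iff. unfold crosses. rewrite orbit_wedge_add6, nbr_add6.
  replace (i + 6 + 3) with (i + 3 + 6) by lia. rewrite orbit_wedge_add6. reflexivity.
Qed.

Lemma crossb_mod p i : crossb p i = crossb p (i mod 6).
Proof.
  rewrite (Nat.div_mod_eq i 6) at 1. generalize (i / 6) as q. induction q as [|q IH].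
  - rewrite Nat.mul_0_r. reflexivity.
  - replace (6 * S q + i mod 6) with (6 * q + i mod 6 + 6) by lia. rewrite crossb_add6. exact IH.
Qed.

Lemma crossb_occupied p i : In p C -> In (nbr p i) C -> crossb p i = false.
Proof.
  intros Hp Hq. apply crossb_false. rewrite <- (nbr_opp p i) in Hp.
  intros [(_ & H & _) | (_ & H & _)]; auto.
Qed.

Lemma crossb_empty p i : ~ In p C -> ~ In (nbr p i) C -> crossb p i = false.
Proof. intros Hp Hq. apply crossb_false. intros [(H & _) | (H & _)]; auto. Qed.

Lemma crosses_out p i : In p C -> ~ In (nbr p i) C -> (crosses p i <-> orbit_wedge p i).
Proof. intros Hp Hq. unfold crosses. split; [intros [H | (H & _)] | ]; tauto. Qed.

Lemma crosses_in p i : ~ In p C -> In (nbr p i) C -> (crosses p i <-> orbit_wedge (nbr p i) (i + 3)).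
Proof. intros Hp Hq. unfold crosses. split; [intros [(H & _) | H] | ]; tauto. Qed.

Lemma crossb_triangle_occupied v i : In v C ->
  xorb (crossb v i) (crossb (nbr v i) (i + 2)) = crossb v (i + 1).
Proof.
  intro Hv.
  assert (Hav : nbr (nbr v i) (i + 2 + 1) = v).
  { replace (i + 2 + 1) with (i + 3) by lia. apply nbr_opp. }
  assert (Hbv : nbr (nbr v (i + 1)) (i + 4) = v).
  { replace (i + 4) with (i + 1 + 3) by lia. apply nbr_opp. }
  destruct (classic (In (nbr v i) C)) as [Ha | Ha];
    destruct (classic (In (nbr v (i + 1)) C)) as [Hb | Hb].
  - rewrite !crossb_occupied; rewrite ?nbr_triangle; auto.
  - rewrite (crossb_occupied v i) by auto. apply crossb_iff.
    rewrite crosses_out by (rewrite ?nbr_triangle; auto).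
    rewrite (crosses_out v (i + 1)), (orbit_wedge_iff v (i + 1)), succ_nbr_prev by auto.
    unfold orbit_wedge. rewrite nbr_triangle, ccw_nbr_succ, Hav by (rewrite Hav; auto).
    tauto.
  - rewrite (crossb_occupied v (i + 1)) by auto.
    enough (Heq : crossb v i = crossb (nbr v i) (i + 2))
      by (rewrite Heq; apply xorb_nilpotent).
    apply crossb_iff.
    rewrite crosses_out, crosses_in by (rewrite ?nbr_triangle; auto).
    rewrite nbr_triangle. replace (i + 2 + 3) with (i + 4 + 1) by lia.
    assert (Hba : nbr (nbr v (i + 1)) (i + 4 + 1) = nbr v i).
    { replace (i + 4 + 1) with (i + 5) by lia. apply nbr_triangle'. }
    rewrite (orbit_wedge_iff (nbr v (i + 1))), succ_nbr_prev, Hbv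
      by (rewrite ?Hbv, ?Hba; auto).
    unfold orbit_wedge. rewrite ccw_nbr_succ by auto. tauto.
  - rewrite (crossb_empty (nbr v i) (i + 2)), xorb_false_r by (rewrite ?nbr_triangle; auto).
    apply crossb_iff. rewrite !crosses_out by auto.
    unfold orbit_wedge. rewrite ccw_nbr_gap by auto. tauto.
Qed.

Lemma crossb_triangle v i :
  xorb (crossb v i) (crossb (nbr v i) (i + 2)) = crossb v (i + 1).
Proof.
  destruct (classic (In v C)) as [Hv | Hv]; [apply crossb_triangle_occupied; exact Hv|].
  destruct (classic (In (nbr v i) C)) as [Ha | Ha].
  - pose proof (crossb_triangle_occupied _ (i + 2) Ha) as T.
    rewrite nbr_triangle in T. replace (i + 2 + 2) with (i + 1 + 3) in T by lia.
    replace (i + 2 + 1) with (i + 3) in T by lia. rewrite !crossb_sym in T.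
    revert T. destruct (crossb v i), (crossb (nbr v i) (i + 2)), (crossb v (i + 1)); easy.
  - destruct (classic (In (nbr v (i + 1)) C)) as [Hb | Hb].
    + pose proof (crossb_triangle_occupied _ (i + 4) Hb) as T.
      replace (i + 4 + 2) with (i + 6) in T by lia.
      replace (i + 4 + 1) with (i + 2 + 3) in T by lia.
      replace (i + 4) with (i + 1 + 3) in T by lia.
      rewrite nbr_opp, crossb_add6, crossb_sym, <- nbr_triangle, crossb_sym in T.
      revert T. destruct (crossb v i), (crossb (nbr v i) (i + 2)), (crossb v (i + 1)); easy.
    + rewrite !crossb_empty; rewrite ?nbr_triangle; auto.
Qed.

Section Potential.
Variable Y0 : Z.
Hypothesis C_above : forall p, In p C -> (Y0 < snd p)%Z.

Fixpoint column_parity (x : Z) (n : nat) : bool :=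
  match n with
  | 0 => false
  | S m => xorb (column_parity x m) (crossb (x, (Y0 + Z.of_nat m)%Z) 1)
  end.

(* Parity of the number of crossings on the vertical segment from height [Y0]
   (below every occupied vertex) up to [p]; [false] at or below [Y0]. *)
Definition inside (p : point) : bool := column_parity (fst p) (Z.to_nat (snd p - Y0)).

Lemma crossb_low p i : (snd p <= Y0)%Z -> (snd (nbr p i) <= Y0)%Z -> crossb p i = false.
Proof. intros Hp Hq. apply crossb_empty; intro H; apply C_above in H; lia. Qed.

Lemma inside_up x y : inside (x, (y + 1)%Z) = xorb (inside (x, y)) (crossb (x, y) 1).
Proof.
  unfold inside. simpl. destruct (Z_le_gt_dec Y0 y).
  - replace (Z.to_nat (y + 1 - Y0)) with (S (Z.to_nat (y - Y0))) by lia. simpl.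
    do 3 f_equal. lia.
  - replace (Z.to_nat (y + 1 - Y0)) with 0 by lia. replace (Z.to_nat (y - Y0)) with 0 by lia.
    rewrite crossb_low; [reflexivity | simpl; lia | rewrite nbr1; simpl; lia].
Qed.

Lemma inside_right x y : inside ((x + 1)%Z, y) = xorb (inside (x, y)) (crossb (x, y) 0).
Proof.
  assert (Hlow : forall y, (y <= Y0)%Z ->
    inside ((x + 1)%Z, y) = xorb (inside (x, y)) (crossb (x, y) 0)).
  { intros y' Hy. unfold inside. simpl. replace (Z.to_nat (y' - Y0)) with 0 by lia.
    rewrite crossb_low; [reflexivity | simpl; lia | rewrite nbr0; simpl; lia]. }
  destruct (Z_le_gt_dec y Y0) as [Hy | Hy]; [apply Hlow; exact Hy|].
  replace y with (Y0 + Z.of_nat (Z.to_nat (y - Y0)))%Z by lia.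
  induction (Z.to_nat (y - Y0)) as [|n IH]; [apply Hlow; lia|].
  set (y' := (Y0 + Z.of_nat n)%Z) in *.
  replace (Y0 + Z.of_nat (S n))%Z with (y' + 1)%Z by lia.
  rewrite !inside_up, IH.
  pose proof (crossb_triangle (x, y') 0) as T1.
  pose proof (crossb_triangle ((x + 1)%Z, y') 1) as T2.
  pose proof (crossb_sym (x, (y' + 1)%Z) 0) as T3.
  rewrite nbr0 in T1, T3. rewrite nbr1 in T2. simpl in T1, T2, T3. rewrite T3 in T2.
  revert T1 T2. destruct (inside (x, y')), (crossb (x, y') 0), (crossb (x, y') 1),
    (crossb ((x + 1)%Z, y') 1), (crossb ((x + 1)%Z, y') 2), (crossb (x, (y' + 1)%Z) 0); easy.
Qed.

Lemma inside_upleft x y :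
  inside ((x - 1)%Z, (y + 1)%Z) = xorb (inside (x, y)) (crossb (x, y) 2).
Proof.
  rewrite inside_up.
  pose proof (inside_right (x - 1) y) as H. replace (x - 1 + 1)%Z with x in H by lia.
  pose proof (crossb_triangle ((x - 1)%Z, y) 0) as T. rewrite nbr0 in T. simpl in T.
  replace (x - 1 + 1)%Z with x in T by lia. rewrite H.
  revert T. destruct (inside ((x - 1)%Z, y)), (crossb ((x - 1)%Z, y) 0),
    (crossb ((x - 1)%Z, y) 1), (crossb (x, y) 2); easy.
Qed.

Lemma inside_nbr p i : inside (nbr p i) = xorb (inside p) (crossb p i).
Proof.
  assert (Hlow : forall p i, i < 3 -> inside (nbr p i) = xorb (inside p) (crossb p i)).
  { clear p i. intros [x y] i Hi. destruct i as [|[|[|]]]; try lia.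
    - rewrite nbr0. apply inside_right.
    - rewrite nbr1. apply inside_up.
    - rewrite nbr2. apply inside_upleft. }
  rewrite nbr_mod, crossb_mod. pose proof (mod6_lt i) as Hi.
  destruct (lt_dec (i mod 6) 3) as [Hl | Hl]; [apply Hlow; exact Hl|].
  replace (i mod 6) with (i mod 6 - 3 + 3) by lia. set (j := i mod 6 - 3).
  pose proof (Hlow (nbr p (j + 3)) j ltac:(lia)) as H.
  rewrite <- (nbr_add6 _ j), <- (crossb_add6 _ j) in H.
  replace (j + 6) with (j + 3 + 3) in H by lia.
  rewrite nbr_opp, crossb_sym in H. rewrite H.
  destruct (inside (nbr p (j + 3))), (crossb p (j + 3)); reflexivity.
Qed.

Lemma inside_path p q : path_in (fun x => In x C) p q -> inside q = inside p.
Proof.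
  induction 1 as [p Hp | p q r Hp Hpq Hqr IH]; [reflexivity|].
  rewrite IH. apply adj_nbr in Hpq as [i ->].
  rewrite inside_nbr, crossb_occupied; [apply xorb_false_r | exact Hp |].
  inversion Hqr; assumption.
Qed.

Lemma inside_empty_column x y : (forall y', ~ In (x, y') C) -> inside (x, y) = false.
Proof.
  intro Hx. unfold inside. simpl. induction (Z.to_nat (y - Y0)) as [|n IH]; [reflexivity|].
  simpl. rewrite IH, crossb_empty; [reflexivity | apply Hx |]. rewrite nbr1. apply Hx.
Qed.

Lemma inside_above Xmax Ymax x y :
  (forall q, In q C -> (fst q <= Xmax)%Z) -> (forall q, In q C -> (snd q <= Ymax)%Z) ->
  (Ymax < y)%Z -> inside (x, y) = false.
Proof.
  intros HX HY Hy.
  assert (Hfar : forall x, (Xmax < x)%Z -> inside (x, y) = false).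
  { intros x' Hx'. apply inside_empty_column. intros y' H. apply HX in H. simpl in H. lia. }
  destruct (Z_lt_le_dec Xmax x) as [Hx | Hx]; [apply Hfar; exact Hx|].
  replace x with (Xmax + 1 - Z.of_nat (Z.to_nat (Xmax + 1 - x)))%Z by lia.
  induction (Z.to_nat (Xmax + 1 - x)) as [|n IH].
  - apply Hfar. lia.
  - set (x' := (Xmax + 1 - Z.of_nat (S n))%Z).
    replace (Xmax + 1 - Z.of_nat n)%Z with (x' + 1)%Z in IH by lia.
    rewrite inside_right, crossb_empty, xorb_false_r in IH; [exact IH | |];
      intro H; apply HY in H; rewrite ?nbr0 in H; simpl in H; lia.
Qed.

Lemma exit_visited w i : In w C -> ~ In (nbr w i) C ->
  inside w = true -> inside (nbr w i) = false -> exists k, k < P /\ fst (trace C s k) = w.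
Proof.
  intros Hw Hi Hin Hout. rewrite inside_nbr, Hin in Hout.
  assert (Hc : crosses w i) by (apply crossb_true; destruct (crossb w i); easy).
  apply crosses_out, orbit_wedge_iff in Hc as [k Hk]; auto.
  exists (k mod P). split; [apply Nat.mod_upper_bound; lia|].
  rewrite trace_mod_period, Hk. reflexivity.
Qed.

End Potential.

Lemma trace_fst_dist (c : point -> Z) i d :
  (forall p j, (Z.abs (c (nbr p j) - c p) <= 1)%Z) ->
  (Z.abs (c (fst (trace C s (i + d))) - c (fst (trace C s i))) <= Z.of_nat d)%Z.
Proof.
  intro Hc. induction d as [|d IH]; [rewrite Nat.add_0_r; lia|].
  replace (i + S d) with (S (i + d)) by lia.
  destruct (trace_is_dart C s (i + d) s_dart) as (_ & _ & Hadj).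
  change (trace C s (S (i + d))) with (next C (trace C s (i + d))).
  destruct (trace C s (i + d)) as [a b]. simpl in *.
  apply adj_nbr in Hadj as [j ->]. specialize (Hc a j). lia.
Qed.

(* The walk from [a] to [b] and on back to [a] has total length [P]. *)
Lemma trace_fst_dist_period (c : point -> Z) a b :
  (forall p j, (Z.abs (c (nbr p j) - c p) <= 1)%Z) -> a < P -> b < P ->
  (2 * Z.abs (c (fst (trace C s b)) - c (fst (trace C s a))) <= Z.of_nat P)%Z.
Proof.
  intros Hc Ha Hb.
  assert (Hle : forall a b, a <= b < P ->
    (2 * Z.abs (c (fst (trace C s b)) - c (fst (trace C s a))) <= Z.of_nat P)%Z).
  { intros a' b' Hab.
    pose proof (trace_fst_dist c a' (b' - a') Hc) as D1.
    pose proof (trace_fst_dist c b' (P - b' + a') Hc) as D2.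
    replace (a' + (b' - a')) with b' in D1 by lia.
    replace (b' + (P - b' + a')) with (a' + P) in D2 by lia.
    rewrite trace_add_period in D2. lia. }
  destruct (le_lt_dec a b); [apply Hle; lia|].
  pose proof (Hle b a ltac:(lia)). lia.
Qed.

Section BottomLeft.
Variable u : point.
Hypothesis u_bottom_left : bottom_left C u.
Hypothesis s_start : s = start_dart C u.
Hypothesis C_connected : connected C.

Lemma above_bottom_left p : In p C -> (snd u - 1 < snd p)%Z.
Proof. intro Hp. destruct (proj2 u_bottom_left p Hp); lia. Qed.

Lemma inside_bottom_left : inside (snd u - 1) u = true.
Proof.
  destruct u_bottom_left as [Hu Hbl].
  assert (Hdown : ~ In (nbr u 4) C).
  { intro H. destruct (Hbl _ H); unfold nbr, padd in *; simpl in *; lia. }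
  assert (Hleft : ~ In (nbr u 3) C).
  { intro H. destruct (Hbl _ H); unfold nbr, padd in *; simpl in *; lia. }
  assert (Hc : crossb u 4 = true).
  { apply crossb_true, crosses_out, orbit_wedge_iff; auto.
    replace 4 with (3 + 1) by reflexivity. rewrite succ_nbr_gap by auto.
    exists 0. rewrite s_start. reflexivity. }
  pose proof (inside_nbr _ above_bottom_left (nbr u 4) 1) as H.
  rewrite <- (nbr_add6 _ 1), <- (crossb_add6 _ 1) in H.
  replace (1 + 6) with (4 + 3) in H by reflexivity.
  rewrite nbr_opp, crossb_sym, Hc in H. rewrite H. unfold inside, nbr, padd. simpl.
  replace (snd u + -1 - (snd u - 1))%Z with 0%Z by lia. reflexivity.
Qed.

Lemma boundary_visited w i : In w C -> ~ In (nbr w i) C ->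
  inside (snd u - 1) (nbr w i) = false -> exists k, k < P /\ fst (trace C s k) = w.
Proof.
  intros Hw Hi Hout. apply (exit_visited (snd u - 1) above_bottom_left w i Hw Hi); auto.
  rewrite (inside_path _ above_bottom_left u w); [apply inside_bottom_left|].
  apply C_connected; [apply u_bottom_left | exact Hw].
Qed.

Lemma extent_le_perimeter p q : In p C -> In q C ->
  (2 * (fst q - fst p) <= Z.of_nat P)%Z /\ (2 * (snd q - snd p) <= Z.of_nat P)%Z.
Proof.
  intros Hp Hq.
  assert (Hne : C <> []) by (intros ->; contradiction).
  destruct (exists_max snd C Hne) as [t [Ht Htop]].
  destruct (exists_max fst C Hne) as [r [Hr Hright]].
  destruct (exists_max (fun v => - fst v)%Z C Hne) as [l [Hl Hleft]].
  assert (Hvisited : forall w i, In w C -> (forall y, ~ In (fst (nbr w i), y) C) ->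
    exists k, k < P /\ fst (trace C s k) = w).
  { intros w i Hw Hcol. apply boundary_visited with i; [exact Hw | |].
    - rewrite (surjective_pairing (nbr w i)). apply Hcol.
    - rewrite (surjective_pairing (nbr w i)). apply inside_empty_column. exact Hcol. }
  destruct (Hvisited r 0 Hr) as [jr [Hjr Er]].
  { intros y H. apply Hright in H. unfold nbr, padd in H. simpl in H. lia. }
  destruct (Hvisited l 3 Hl) as [jl [Hjl El]].
  { intros y H. apply Hleft in H. unfold nbr, padd in H. simpl in H. lia. }
  destruct (boundary_visited t 1 Ht) as [jt [Hjt Et]].
  { intro H. apply Htop in H. unfold nbr, padd in H. simpl in H. lia. }
  { unfold nbr, padd. simpl. apply (inside_above _ above_bottom_left (fst r) (snd t)); auto. lia. }
  assert (Eu : fst (trace C s 0) = u) by (rewrite s_start; reflexivity).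
  pose proof (trace_fst_dist_period fst jl jr (fun p j => proj1 (nbr_close p j)) Hjl Hjr) as DX.
  pose proof (trace_fst_dist_period snd 0 jt (fun p j => proj2 (nbr_close p j)) P_pos Hjt) as DY.
  rewrite Er, El in DX. rewrite Et, Eu in DY.
  pose proof (Hright q Hq). pose proof (Hleft p Hp). pose proof (Htop q Hq).
  pose proof (above_bottom_left p Hp). split; lia.
Qed.

End BottomLeft.
End FaceOrbit.

Lemma start_dart_is_dart C u : In u C -> (exists j, In (nbr u j) C) -> is_dart C (start_dart C u).
Proof.
  intros Hu [j Hj]. unfold start_dart. change (padd u (dir 3)) with (nbr u 3).
  rewrite succ_nbr. split; [exact Hu | split].
  - apply occ_at_true, cw_idx_true;
      [apply occ_at_periodic6 | apply mod6_lt | exact (any6_occ_at C u j Hj)].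
  - apply adj_nbr. eexists. reflexivity.
Qed.

Lemma connected_has_nbr C : NoDup C -> 2 <= length C -> connected C ->
  forall v, In v C -> exists j, In (nbr v j) C.
Proof.
  intros Hnd Hn Hconn v Hv.
  assert (Hother : exists q, In q C /\ q <> v).
  { destruct C as [|a [|b l]]; simpl in Hn; try lia.
    apply NoDup_cons_iff in Hnd as [Hab _].
    destruct (classic (a = v)) as [<- | Hav].
    - exists b. split; [right; left; reflexivity|]. intros <-. apply Hab. left. reflexivity.
    - exists a. split; [left; reflexivity | exact Hav]. }
  destruct Hother as [q [Hq Hqv]].
  destruct (Hconn v q Hv Hq) as [| v w r _ Hvw Hwr]; [contradiction|].
  apply adj_nbr in Hvw as [j ->]. exists j. inversion Hwr; assumption.
Qed.

Lemma box_card (C : list point) x0 y0 n : NoDup C ->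
  (forall q, In q C -> (x0 <= fst q <= x0 + Z.of_nat n)%Z /\ (y0 <= snd q <= y0 + Z.of_nat n)%Z) ->
  length C <= S n * S n.
Proof.
  intros Hnd Hbox.
  set (B := list_prod (map (fun k => (x0 + Z.of_nat k)%Z) (seq 0 (S n)))
                      (map (fun k => (y0 + Z.of_nat k)%Z) (seq 0 (S n)))).
  replace (S n * S n) with (length B)
    by (unfold B; rewrite length_prod, !length_map, !length_seq; reflexivity).
  apply NoDup_incl_length; [exact Hnd|].
  intros [x y] Hq. destruct (Hbox _ Hq) as [Hx Hy]. simpl in Hx, Hy.
  apply in_prod; apply in_map_iff.
  - exists (Z.to_nat (x - x0)). split; [lia | apply in_seq; lia].
  - exists (Z.to_nat (y - y0)). split; [lia | apply in_seq; lia].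
Qed.

Lemma length_le_square C P : NoDup C -> 2 <= length C ->
  (forall p q, In p C -> In q C ->
     (2 * (fst q - fst p) <= Z.of_nat P)%Z /\ (2 * (snd q - snd p) <= Z.of_nat P)%Z) ->
  length C <= P * P.
Proof.
  intros Hnd Hn Hext.
  assert (Hne : C <> []) by (intros ->; simpl in Hn; lia).
  destruct (exists_max (fun v => - fst v)%Z C Hne) as [l [Hl Hleft]].
  destruct (exists_max (fun v => - snd v)%Z C Hne) as [b [Hb Hbot]].
  pose proof (Nat.div_mod_eq P 2). pose proof (Nat.mod_upper_bound P 2 ltac:(lia)).
  assert (Hbox : length C <= S (P / 2) * S (P / 2)).
  { apply (box_card C (fst l) (snd b)); [exact Hnd|]. intros q Hq.
    destruct (Hext l q Hl Hq) as [Hx _]. destruct (Hext b q Hb Hq) as [_ Hy].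
    specialize (Hleft q Hq). specialize (Hbot q Hq). lia. }
  assert (HP : 1 <= P / 2) by (destruct (P / 2); simpl in Hbox; lia).
  nia.
Qed.

Theorem lemma1 (C : list point) (Hnd : NoDup C) (Hn : (2 <= length C)%nat)
  (Hconn : connected C) (Hholes : no_holes C) :
  exists p : nat, perimeter C p /\ (sqrt (INR (length C)) <= INR p)%R.
Proof.
  pose proof (connected_has_nbr C Hnd Hn Hconn) as C_nbr.
  destruct (exists_bottom_left C) as [u Hu]; [intros ->; simpl in Hn; lia|].
  assert (Hs : is_dart C (start_dart C u))
    by (apply start_dart_is_dart, C_nbr; apply Hu).
  destruct (trace_period C _ Hs) as [P (HP & HPs & Hmin)].
  exists P. split; [exists u; auto|].
  assert (Hsq : length C <= P * P).
  { apply length_le_square; [exact Hnd | exact Hn |].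
    intros p q Hp Hq. apply (extent_le_perimeter C _ P Hs HP HPs C_nbr u); auto. }
  rewrite <- (sqrt_square (INR P)) by apply pos_INR.
  apply sqrt_le_1_alt. rewrite <- mult_INR. apply le_INR. exact Hsq.
Qed.
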